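(* Let $n>k\geq 1$ and $r=n-k$. There exists an $(n,k,\ell)$ MDS array code with $\ell=\mathrm{lcm}(1,2,\ldots,r)\cdot r^n$ that satisfies the $(h,d)$-optimal repair property simultaneously for all integer pairs $(h,d)$ with $1\leq h\leq n-k$, $k\leq d\leq n-h$ and $h\mid(d-k)$.
   Context: An $(n,k,\ell)$ MDS array code over a finite field $F$ is an $F$-linear set of vectors $(\bm c_1,\ldots,\bm c_n)$, $\bm c_i\in F^\ell$ (node $i$ stores $\bm c_i$), of dimension $k\ell$, such that any $k$ coordinates $\bm c_i$ determine the codeword. For $1\leq h\leq n-k$, $k\leq d\leq n-h$, the $(h,d)$-optimal repair property means: for every $h$-subset $\mathcal{H}\subseteq[n]$ of failed nodes and every $d$-subset $\mathcal{R}\subseteq[n]\setminus\mathcal{H}$ of helper nodes, each helper $j\in\mathcal{R}$ can send $\beta=\frac{h\ell}{d-k+h}$ symbols of $F$ computed from $\bm c_j$ such that from these $\frac{dh\ell}{d-k+h}$ symbols in total all $\bm c_i$, $i\in\mathcal{H}$, are determined, for every codeword (equality in the cut-set bound). *)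

From HB Require Import structures.
From mathcomp Require Import all_boot all_order all_algebra all_field.
Set Implicit Arguments. Unset Strict Implicit. Unset Printing Implicit Defensive.
Import GRing.Theory.
Local Open Scope ring_scope.

(* A codeword is an n x l matrix over F; row i is the content c_i of node i. *)

Definition MDS_array_code (F : fieldType) (n k l : nat)
    (C : {vspace 'M[F]_(n, l)}) : Prop :=
  (\dim C = k * l)%N /\
  forall S : {set 'I_n}, #|S| = k ->
    forall c1 c2 : 'M[F]_(n, l), c1 \in C -> c2 \in C ->
      (forall i, i \in S -> row i c1 = row i c2) -> c1 = c2.

Definition repair_beta (k l h d : nat) : nat := (h * l %/ (d - k + h))%N.

Definition hd_optimal_repair (F : fieldType) (n k l : nat)
    (C : {vspace 'M[F]_(n, l)}) (h d : nat) : Prop :=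
  ((d - k + h) %| h * l)%N /\
  forall H R : {set 'I_n}, #|H| = h -> #|R| = d -> [disjoint H & R] ->
    exists f : 'I_n -> 'rV[F]_l -> 'rV[F]_(repair_beta k l h d),
    exists g : ('I_n -> 'rV[F]_(repair_beta k l h d)) -> 'M[F]_(n, l),
      forall c, c \in C -> forall i, i \in H ->
        row i (g (fun j => if j \in R then f j (row j c) else 0)) = row i c.

Definition lcm_upto (r : nat) : nat := \big[lcmn/1%N]_(1 <= i < r.+1) i.

From HB Require Import structures.
From mathcomp Require Import all_boot all_order all_algebra all_field.
From mathcomp Require Import zify.
Set Implicit Arguments. Unset Strict Implicit. Unset Printing Implicit Defensive.
Import GRing.Theory.
Local Open Scope ring_scope.

(* The code is cut out by column-wise Vandermonde parity checks: column x of a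
   codeword c satisfies sum_i lam_(i,x)^e c_(i,x) = 0 for e < r, where the
   points lam_(i,x) are pairwise distinct in i.  A codeword vanishing on n - r
   rows is therefore zero, which gives the MDS property.
   Columns are indexed by pairs (z, a) with z < L = lcm(1, ..., r) and
   a : [n] -> Z_r, and lam_(i,(z,a)) = omega(i, a_i) for an injective omega.
   To repair h nodes H from d helpers, let t = (d - k)/h + 1, so that t | L and
   h t = d - k + h, and group the columns into l/t classes of t columns by
   shifting the H-coordinates of a by z mod t.  Every helper sends its sums
   over the classes.  On a class the points of a node outside H are constant,
   so summing the parity checks over a class leaves h t unknowns of the failed
   nodes and one aggregated unknown for each of the n - h - d other nodes, at
   h t + n - h - d = r pairwise distinct points: they all vanish. *)

Section PowerSums.
Variables (F : fieldType) (I : finType).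
Implicit Types (A : {pred I}) (nu a : I -> F).

Lemma sum_hornerM A nu a (P : {poly F}) :
  \sum_(p in A) P.[nu p] * a p
    = \sum_(e < size P) P`_e * \sum_(p in A) nu p ^+ e * a p.
Proof.
under [RHS]eq_bigr do rewrite mulr_sumr.
rewrite exchange_big /=; apply: eq_bigr => p _.
by rewrite horner_coef mulr_suml; apply: eq_bigr => e _; rewrite mulrA.
Qed.

Lemma power_sums_eq0 A nu a r :
  (#|A| <= r)%N -> {in A &, injective nu} ->
  (forall e, (e < r)%N -> \sum_(p in A) nu p ^+ e * a p = 0) ->
  {in A, forall p, a p = 0}.
Proof.
move=> cardA nu_inj sums0 p0 Ap0.
pose P := \prod_(x <- [seq nu p | p in [predD1 A & p0]]) ('X - x%:P).
have rootP q : root P (nu q) = [exists p in [predD1 A & p0], nu p == nu q].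
  rewrite root_prod_XsubC; apply/mapP/exists_inP => [[p] | [p]].
    by rewrite mem_enum => Dp ->; exists p.
  by move=> Dp /eqP <-; exists p; rewrite ?mem_enum.
have sizeP : (size P <= r)%N.
  rewrite size_prod_XsubC size_map -cardE.
  by rewrite (cardD1 p0 A) Ap0 in cardA.
have : \sum_(p in A) P.[nu p] * a p = 0.
  rewrite sum_hornerM big1 // => e _.
  by rewrite sums0 ?mulr0 // (leq_trans (ltn_ord e)).
rewrite (bigD1 p0) //= big1 ?addr0 => [/eqP|p /andP[Ap p_neq0]].
  rewrite mulf_eq0 -/(root P _) rootP => /orP[/exists_inP[p /andP[/= p_neq0 Ap]]|/eqP//].
  by move/eqP/(nu_inj _ _ Ap Ap0); move/eqP: p_neq0.
apply/eqP; rewrite mulf_eq0 -/(root P _) rootP; apply/orP; left.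
by apply/exists_inP; exists p; rewrite // inE /= p_neq0.
Qed.
End PowerSums.

Section ParityCheckCode.
Variables (F : fieldType) (n l r : nat) (lam : 'I_n -> 'I_l -> F).
Implicit Types c : 'M[F]_(n, l).

Definition syndrome (c : 'M[F]_(n, l)) : 'M[F]_(r, l) :=
  \matrix_(e < r, x < l) \sum_(i < n) lam i x ^+ e * c i x.

Fact syndrome_is_semilinear : semilinear syndrome.
Proof.
split=> [a c | c c']; apply/matrixP => e x; rewrite !mxE.
  by rewrite mulr_sumr; apply: eq_bigr => i _; rewrite !mxE mulrCA.
by rewrite -big_split; apply: eq_bigr => i _; rewrite !mxE mulrDr.
Qed.
HB.instance Definition _ := GRing.isSemilinear.Build F 'M[F]_(n, l) 'M[F]_(r, l)
  _ syndrome syndrome_is_semilinear.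

Definition code : {vspace 'M[F]_(n, l)} := lker (linfun syndrome).

Lemma codeP c :
  reflect (forall e x, (e < r)%N -> \sum_(i < n) lam i x ^+ e * c i x = 0)
          (c \in code).
Proof.
rewrite memv_ker lfunE /=; apply: (iffP eqP) => [/matrixP c0 e x lt_er | c0].
  by have := c0 (Ordinal lt_er) x; rewrite !mxE.
by apply/matrixP => e x; rewrite !mxE c0.
Qed.

Hypothesis lam_inj : forall x i j, lam i x = lam j x -> i = j.

Lemma code_eq0 (S : {set 'I_n}) c :
  (#|~: S| <= r)%N -> c \in code -> (forall i x, i \in S -> c i x = 0) ->
  c = 0.
Proof.
move=> cardS /codeP c_code c_S; apply/matrixP => i x; rewrite mxE.
have [Si|nSi] := boolP (i \in S); first exact: c_S.
apply: (@power_sums_eq0 F _ (~: S) (lam ^~ x) (c ^~ x) r) => //.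
- by move=> ? ? _ _; apply: lam_inj.
- move=> e lt_er; rewrite -[RHS](c_code e x lt_er) [RHS](bigID (mem S)) /=.
  rewrite [X in _ = X + _]big1 ?add0r => [|j Sj]; last by rewrite c_S ?mulr0.
  by apply: eq_bigl => j; rewrite in_setC.
- by rewrite in_setC.
Qed.

Lemma dim_code : (r <= n)%N -> \dim code = ((n - r) * l)%N.
Proof.
move=> le_rn; set k := (n - r)%N; have le_kn : (k <= n)%N := leq_subr r n.
apply/eqP; rewrite eqn_leq; apply/andP; split.
  pose top : 'Hom('M[F]_(n, l), 'M[F]_(k, l)) := linfun (mulmx (pid_mx k)).
  rewrite -(limg_dim_eq (f := top)); last first.
    apply/eqP; rewrite -subv0; apply/subvP => c.
    rewrite memv_cap memv_ker lfunE /= memv0 => /andP[code_c /eqP top_c].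
    apply/eqP/(@code_eq0 [set widen_ord le_kn i | i in 'I_k]) => //.
    - rewrite cardsCs setCK card_imset ?card_ord /k ?subKn //.
      by move=> i j [/val_inj].
    - move=> _ x /imsetP[i _ ->]; move/matrixP: top_c => /(_ i x).
      by rewrite (@pid_mxErow F k n le_kn) -rowsubE !mxE.
  by apply: leq_trans (dimvS (subvf _)) _; rewrite dimvf.
have dim_sum : (\dim code + \dim (limg (linfun syndrome)) = n * l)%N.
  by rewrite /code -[lker _]capfv limg_ker_dim dimvf.
rewrite /k mulnBl -dim_sum leq_subLR addnC leq_add2r.
by apply: leq_trans (dimvS (subvf _)) _; rewrite dimvf.
Qed.

Lemma code_MDS : (r <= n)%N -> MDS_array_code (n - r) code.
Proof.
move=> le_rn; split=> [|S cardS c1 c2 c1_code c2_code rows_eq]; first exact: dim_code.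
apply/eqP; rewrite -subr_eq0; apply/eqP/(@code_eq0 S).
- by have := cardsC S; rewrite cardS card_ord; lia.
- exact: memvB.
- move=> i x Si; move/matrixP: (rows_eq i Si) => /(_ 0 x).
  by rewrite !mxE => ->; rewrite subrr.
Qed.

Section Block.
Variables (H R : {set 'I_n}) (K : {set 'I_l}) (x0 : 'I_l).
Local Notation N := (~: (H :|: R)).
Hypothesis lam_out : forall j y, j \notin H -> y \in K -> lam j y = lam j x0.

Lemma code_block_sum c e :
  c \in code -> (forall j, j \in R -> \sum_(y in K) c j y = 0) -> (e < r)%N ->
  \sum_(i in H) \sum_(y in K) lam i y ^+ e * c i y
    + \sum_(j in N) lam j x0 ^+ e * \sum_(y in K) c j y = 0.
Proof.
move=> /codeP c_code c_R lt_er.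
have : \sum_(y in K) \sum_(i < n) lam i y ^+ e * c i y = 0.
  by apply: big1 => y _; exact: c_code.
rewrite exchange_big (bigID (mem H)) /= => sum0; rewrite -[RHS]sum0; congr (_ + _).
have sumK_out i : i \notin H ->
    \sum_(y in K) lam i y ^+ e * c i y = lam i x0 ^+ e * \sum_(y in K) c i y.
  by move=> nHi; rewrite mulr_sumr; apply: eq_bigr => y Ky; rewrite lam_out.
rewrite [RHS](bigID (mem R)) /= [X in _ = X + _]big1 ?add0r => [|i /andP[nHi Ri]].
  apply: eq_big => [j | j]; first by rewrite !inE negb_or.
  by rewrite !inE negb_or => /andP[nHj _]; rewrite sumK_out.
by rewrite sumK_out // c_R ?mulr0.
Qed.

Hypothesis Kx0 : x0 \in K.
Hypothesis lam_in : forall i i' y z, i \in H -> i' \in H -> y \in K -> z \in K ->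
  lam i y = lam i' z -> y = z.

(* The unknowns of a block: c i y at (i, y) in H x K, and the sum over K of the
   row of a node j that is neither failed nor a helper, at (j, x0). *)
Local Notation unknowns := [predU setX H K & setX N [set x0]].

Lemma block_points_inj : {in unknowns &, injective (fun p => lam p.1 p.2)}.
Proof.
have in_K p : p \in unknowns -> p.2 \in K.
  by case: p => i y; rewrite !inE => /orP[/andP[_ ->] | /andP[_ /eqP ->]].
have notin_H p : p \in unknowns -> p.1 \notin H -> p.2 = x0.
  by case: p => i y; rewrite !inE => /orP[/andP[-> _] | /andP[_ /eqP ->]].
move=> [i y] [j z] Aiy Ajz /= eq_lam.
have [Ky Kz] : y \in K /\ z \in K := conj (in_K _ Aiy) (in_K _ Ajz).
have eq_ij : i = j.
  have [Hi|nHi] := boolP (i \in H); last first.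
    by apply: (@lam_inj z); rewrite -eq_lam !lam_out.
  have [Hj|nHj] := boolP (j \in H); last first.
    by apply: (@lam_inj y); rewrite eq_lam !lam_out.
  by apply: (@lam_inj z); rewrite -eq_lam (lam_in Hi Hj Ky Kz eq_lam).
subst j; congr (_, _).
have [Hi|nHi] := boolP (i \in H); first exact: (lam_in Hi Hi Ky Kz eq_lam).
by rewrite [y](notin_H _ Aiy nHi) [z](notin_H _ Ajz nHi).
Qed.

Lemma code_block_repair c :
  (#|H| * #|K| + #|N| <= r)%N ->
  c \in code -> (forall j, j \in R -> \sum_(y in K) c j y = 0) ->
  {in H, forall i, c i x0 = 0}.
Proof.
move=> card_le c_code c_R i0 Hi0.
pose a (p : 'I_n * 'I_l) := if p.1 \in H then c p.1 p.2 else \sum_(y in K) c p.1 y.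
have <- : a (i0, x0) = c i0 x0 by rewrite /a /= Hi0.
apply: (@power_sums_eq0 F _ unknowns (fun p => lam p.1 p.2) a r).
- apply: leq_trans card_le; rewrite -[#|N|]muln1 -(cards1 x0) -!cardsX.
  by rewrite -cardUI; exact: leq_addr.
- exact: block_points_inj.
- move=> e lt_er; rewrite bigU /=; last first.
    by apply/pred0P => -[i y] /=; rewrite !inE; case: (i \in H); rewrite ?andbF.
  rewrite -[RHS](code_block_sum c_code c_R lt_er); congr (_ + _).
    rewrite pair_big_dep /=; apply: eq_big => -[i y]; rewrite ?in_setX //=.
    by case/andP=> Hi _; rewrite /a /= Hi.
  rewrite [RHS](eq_bigr (fun j => \sum_(y in [set x0]) lam j y ^+ e * a (j, y))).
    by rewrite pair_big_dep; apply: eq_bigl => -[j y]; rewrite in_setX.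
  by move=> j; rewrite !inE negb_or => /andP[nHj _]; rewrite big_set1 /a /= (negbTE nHj).
- by rewrite !inE Hi0 Kx0.
Qed.
End Block.
End ParityCheckCode.

Lemma repair_of_class_sums (F : finFieldType) n l (C : {vspace 'M[F]_(n, l)})
    (H R : {set 'I_n}) (T : finType) (cls : 'I_l -> T) beta :
  (#|T| <= beta)%N ->
  (forall c, c \in C -> (forall j t, j \in R -> \sum_(y | cls y == t) c j y = 0) ->
     forall i x, i \in H -> c i x = 0) ->
  exists f : 'I_n -> 'rV[F]_l -> 'rV[F]_beta,
  exists g : ('I_n -> 'rV[F]_beta) -> 'M[F]_(n, l),
    forall c, c \in C -> forall i, i \in H ->
      row i (g (fun j => if j \in R then f j (row j c) else 0)) = row i c.
Proof.
move=> le_T_beta repairC.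
pose idx (t : T) : 'I_beta := widen_ord le_T_beta (enum_rank t).
have idx_inj : injective idx.
  by move=> u v /(congr1 val) /= /val_inj /enum_rank_inj.
have idx_eq t y : (idx (cls y) == idx t) = (cls y == t) by rewrite (inj_eq idx_inj).
pose f (j : 'I_n) (v : 'rV[F]_l) := \row_b \sum_(y | idx (cls y) == b) v 0 y.
pose msg c j := if j \in R then f j (row j c) else 0.
exists f, (fun m => odflt 0 [pick c | (c \in C) && [forall j, msg c j == m j]]).
move=> c Cc i Hi; case: pickP => [c' /andP[Cc' /forallP msg_eq] | no_c] /=; last first.
  by have /negbT/negP[] := no_c c; rewrite Cc; apply/forallP => j.
have sums0 j t : j \in R -> \sum_(y | cls y == t) (c - c') j y = 0.
  move=> Rj; move/eqP/matrixP: (msg_eq j) => /(_ 0 (idx t)).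
  rewrite /msg Rj !mxE => sum_eq.
  have row_sum (m : 'M[F]_(n, l)) :
      \sum_(y | cls y == t) m j y = \sum_(y | idx (cls y) == idx t) row j m 0 y.
    by apply: eq_big => [y | y _]; rewrite ?idx_eq ?mxE.
  rewrite (eq_bigr (fun y => c j y - c' j y)) => [|y _]; last by rewrite !mxE.
  by rewrite sumrB !row_sum sum_eq subrr.
apply/matrixP => ? x; rewrite !mxE.
by have := repairC _ (memvB Cc Cc') sums0 i x Hi; rewrite !mxE => /eqP; rewrite subr_eq0 => /eqP.
Qed.

(* The redundancy is r.+1 rather than r, so that 'I_r.+1 is a cyclic group. *)
Section Construction.
Variables (F : fieldType) (n r L : nat) (omega : 'I_n * 'I_r.+1 -> F).
Hypothesis omega_inj : injective omega.

Local Notation l := (L * r.+1 ^ n)%N.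
Local Notation column := ('I_L * {ffun 'I_n -> 'I_r.+1})%type.

Lemma card_column : #|{: column}| = l.
Proof. by rewrite card_prod card_ffun !card_ord. Qed.

Definition column_of (x : 'I_l) : column := enum_val (cast_ord (esym card_column) x).

Lemma column_of_inj : injective column_of.
Proof. by move=> x y /enum_val_inj /cast_ord_inj. Qed.

Definition node_point (i : 'I_n) (x : 'I_l) : F := omega (i, (column_of x).2 i).

Lemma node_point_inj x i j : node_point i x = node_point j x -> i = j.
Proof. by move/omega_inj => []. Qed.

Variables (t : nat) (H : {set 'I_n}).
Hypotheses (t_gt0 : (0 < t)%N) (t_le_r : (t <= r.+1)%N) (t_dvd_L : (t %| L)%N).

Lemma ltn_div_ord (z : 'I_L) : (z %/ t < L %/ t)%N.
Proof. by rewrite ltn_divRL // (leq_ltn_trans (leq_divM z t)). Qed.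

Definition repair_class (x : 'I_l) : 'I_(L %/ t) * {ffun 'I_n -> 'I_r.+1} :=
  let: (z, a) := column_of x in
  (Ordinal (ltn_div_ord z),
   [ffun j => if j \in H then a j - inZp (z %% t) else a j]).

Lemma repair_class_mod x y :
  repair_class x = repair_class y ->
  ((column_of x).1 %% t = (column_of y).1 %% t)%N -> x = y.
Proof.
rewrite /repair_class; case Ex: (column_of x) => [zx ax]; case Ey: (column_of y) => [zy ay].
move=> [/= div_eq /ffunP a_eq] mod_eq; apply: column_of_inj; rewrite Ex Ey.
have -> : zx = zy by apply: ord_inj; rewrite (divn_eq zx t) (divn_eq zy t) div_eq mod_eq.
congr (_, _); apply/ffunP => j; move: (a_eq j); rewrite !ffunE mod_eq.
by case: (j \in H) => // /addIr.
Qed.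

Lemma repair_class_out x y j :
  repair_class x = repair_class y -> j \notin H -> node_point j x = node_point j y.
Proof.
rewrite /repair_class /node_point; case: (column_of x) => zx ax; case: (column_of y) => zy ay.
by case=> _ /ffunP /(_ j); rewrite !ffunE => /= + /negbTE nHj; rewrite nHj => ->.
Qed.

Lemma repair_class_in x y i i' :
  i \in H -> i' \in H -> repair_class x = repair_class y ->
  node_point i x = node_point i' y -> x = y.
Proof.
move=> Hi _ eq_cls /omega_inj [<-] a_eq; apply: (repair_class_mod eq_cls).
move: eq_cls; rewrite /repair_class; case Ex: (column_of x) => [zx ax].
case Ey: (column_of y) => [zy ay]; rewrite Ex Ey /= in a_eq.
case=> _ /ffunP /(_ i); rewrite !ffunE Hi a_eq => /addrI /oppr_inj /(congr1 val) /=.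
by rewrite !(modn_small (leq_trans (ltn_pmod _ t_gt0) t_le_r)).
Qed.

Lemma card_repair_class x :
  (#|[set y | repair_class y == repair_class x]| <= t)%N.
Proof.
pose residue y := Ordinal (ltn_pmod (column_of y).1 t_gt0).
apply: (@leq_trans #|'I_t|); last by rewrite card_ord.
apply: (@leq_card_in _ _ residue) => y1 y2.
rewrite !inE => /eqP cls1 /eqP cls2 /(congr1 val) /=.
by apply: repair_class_mod; rewrite cls1 cls2.
Qed.

Lemma node_point_repair (R : {set 'I_n}) c :
  [disjoint H & R] -> (#|H| * t + #|~: (H :|: R)| <= r.+1)%N ->
  c \in code r.+1 node_point ->
  (forall j u, j \in R -> \sum_(y | repair_class y == u) c j y = 0) ->
  forall i x, i \in H -> c i x = 0.
Proof.
move=> dHR card_le c_code c_R i x Hi.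
set K := [set y | repair_class y == repair_class x].
have clsK y : y \in K -> repair_class y = repair_class x by rewrite inE => /eqP.
apply: (@code_block_repair _ _ _ r.+1 _ node_point_inj H R K x) => //.
- by move=> j y nHj /clsK /repair_class_out; apply.
- by rewrite inE.
- move=> i1 i2 y z Hi1 Hi2 /clsK cls_y /clsK cls_z.
  by apply: repair_class_in; rewrite // cls_y cls_z.
- by apply: (leq_trans _ card_le); rewrite leq_add2r leq_mul2l card_repair_class orbT.
- move=> j Rj; rewrite -[RHS](c_R j (repair_class x) Rj).
  by apply: eq_bigl => y; rewrite inE.
Qed.
End Construction.

Lemma repair_beta_div k l h d t :
  (0 < h)%N -> (d - k + h = t * h)%N -> (t %| l)%N -> repair_beta k l h d = (l %/ t)%N.
Proof.
move=> h_gt0 def_th t_dvd_l; rewrite /repair_beta def_th -{1}(divnK t_dvd_l).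
have th_gt0 : (0 < t * h)%N by rewrite -def_th addn_gt0 h_gt0 orbT.
by rewrite mulnC -mulnA mulnK.
Qed.

Lemma dvdn_lcm_upto t r : (0 < t <= r)%N -> (t %| lcm_upto r)%N.
Proof.
move=> /andP[t_gt0 le_tr]; have lt_tr1 : (t < r.+1)%N := le_tr.
by rewrite /lcm_upto big_geq_mkord (biglcmn_sup (Ordinal lt_tr1)) //= t_gt0.
Qed.

Lemma Fp_digits_inj p n m : prime p -> (n * m < p)%N ->
  injective (fun ia : 'I_n * 'I_m => (ia.1 * m + ia.2)%:R : 'F_p).
Proof.
move=> pr_p lt_nm_p [i a] [j b] /(congr1 val) /=; rewrite !val_Fp_nat //.
have := ltn_ord i; have := ltn_ord j; have := ltn_ord a; have := ltn_ord b.
move=> lt_b lt_a lt_j lt_i; rewrite !modn_small; try nia.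
move=> eq_ia; have eq_ij : i = j :> nat by nia.
by congr (_, _); apply: val_inj => //=; move: eq_ia; rewrite eq_ij; lia.
Qed.

Unset Implicit Arguments.
Close Scope ring_scope.

Theorem corollary1 (n k : nat) (hk : (1 <= k)%N) (hkn : (k < n)%N) :
  exists F : finFieldType,
  exists C : {vspace 'M[F]_(n, lcm_upto (n - k) * (n - k) ^ n)},
    MDS_array_code k C /\
    forall h d : nat, (1 <= h <= n - k)%N -> (k <= d <= n - h)%N ->
      (h %| d - k)%N -> hd_optimal_repair k C h d.
Proof.
have [r def_r] : exists r, n - k = r.+1 by exists (n - k).-1; lia.
rewrite def_r; set L := lcm_upto r.+1.
have [p lt_nr_p pr_p] := prime_above (n * r.+1).
pose omega (ia : 'I_n * 'I_r.+1) : 'F_p := ((ia.1 * r.+1 + ia.2)%:R)%R.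
have omega_inj : injective omega := Fp_digits_inj pr_p lt_nr_p.
exists ('F_p : finFieldType), (code r.+1 (node_point (L := L) omega)).
split.
  have -> : k = n - r.+1 by lia.
  by apply: code_MDS; [exact: node_point_inj | lia].
move=> h d /andP[h_gt0 le_h] /andP[le_kd le_d] h_dvd.
set t := ((d - k) %/ h).+1.
have def_th : d - k + h = t * h by rewrite /t mulSn divnK // addnC.
have t_le_r : t <= r.+1 by have := leq_pmulr t h_gt0; lia.
have t_dvd_L : t %| L by apply: dvdn_lcm_upto; rewrite t_le_r.
split; first by rewrite def_th mulnC dvdn_pmul2l // dvdn_mulr.
move=> H R cardH cardR dHR.
rewrite (repair_beta_div h_gt0 def_th (dvdn_mulr _ t_dvd_L)).
apply: (repair_of_class_sums (cls := repair_class H t_dvd_L)).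
  by rewrite card_prod card_ffun !card_ord divn_mulAC.
move=> c c_code c_R; apply: (@node_point_repair _ _ _ _ _ omega_inj t H _ t_le_r t_dvd_L R) => //.
have := cardsC (H :|: R); rewrite card_ord cardsU (disjoint_setI0 dHR) cards0 cardH cardR.
lia.
Qed.
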